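(* If a structure $M$ simply interprets a structure $N$ over $\emptyset$ and $\mathrm{Th}(M)$ is dp-small, then $\mathrm{Th}(N)$ is dp-small.
   Context: Let $M$, $N$ be structures in possibly different languages. For $A\subseteq M$, $M$ simply interprets $N$ over $A$ if there are an $A$-definable set $S\subseteq M$ (a subset of the home sort, i.e. of $M$ itself) and an $A$-definable equivalence relation $E\subseteq M\times M$ on $S$ such that the elements of $N$ are in bijection with $S/E$ and the relations on $S$ induced via this bijection by the relations and functions of $N$ are $A$-definable in $M$. For a complete theory $T$ in language $L$ with monster model $\mathcal{U}$ ($\mathcal{U}_y$ the $|y|$-tuples from $\mathcal{U}$): a partial type $\pi(x)$ is dp-small if there do not exist $L(\mathcal{U})$-formulas $\varphi_i(x)$ ($i<\omega$), an $L$-formula $\psi(x;y)$ and $b_j\in\mathcal{U}_y$ ($j<\omega$) such that for all $i_0,j_0<\omega$ the type $\pi(x)\cup\{\varphi_{i_0}(x),\psi(x;b_{j_0})\}\cup\{\neg\varphi_i(x): i\ne i_0\}\cup\{\neg\psi(x;b_j): j\neq j_0\}$ is consistent. $T$ is dp-small if $x=x$ is dp-small for $x$ a single variable. *)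

From mathcomp Require Import ssreflect ssrfun ssrbool eqtype ssrnat fintype.
Set Implicit Arguments.
Unset Strict Implicit.
Unset Printing Implicit Defensive.

Record language : Type := Language {
  Func : Type;
  Rel : Type;
  farity : Func -> nat;
  rarity : Rel -> nat
}.

Inductive term (L : language) : Type :=
| Var : nat -> term L
| App : forall f : Func L, ('I_(farity f) -> term L) -> term L.

Inductive formula (L : language) : Type :=
| Fals : formula L
| Equ : term L -> term L -> formula L
| Atom : forall r : Rel L, ('I_(rarity r) -> term L) -> formula L
| Neg : formula L -> formula L
| Conj : formula L -> formula L -> formula L
| Disj : formula L -> formula L -> formula L
| Imp : formula L -> formula L -> formula L
| All : nat -> formula L -> formula L
| Ex : nat -> formula L -> formula L.

Record structure (L : language) : Type := Structure {
  carrier :> Type;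
  witness : carrier;
  interp_f : forall f : Func L, ('I_(farity f) -> carrier) -> carrier;
  interp_r : forall r : Rel L, ('I_(rarity r) -> carrier) -> Prop
}.

Definition upd (A : Type) (e : nat -> A) (n : nat) (a : A) : nat -> A :=
  fun k => if k == n then a else e k.

Fixpoint eval (L : language) (M : structure L) (e : nat -> M) (t : term L)
  : M :=
  match t with
  | Var n => e n
  | App f ts => @interp_f L M f (fun i => eval e (ts i))
  end.

Fixpoint sat (L : language) (M : structure L) (e : nat -> M) (phi : formula L)
  : Prop :=
  match phi with
  | Fals => False
  | Equ t1 t2 => eval e t1 = eval e t2
  | Atom r ts => @interp_r L M r (fun i => eval e (ts i))
  | Neg p => ~ sat e p
  | Conj p q => sat e p /\ sat e q
  | Disj p q => sat e p \/ sat e q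
  | Imp p q => sat e p -> sat e q
  | All n p => forall a : M, sat (upd e n a) p
  | Ex n p => exists a : M, sat (upd e n a) p
  end.

(** M and N have the same complete theory: every formula has the same
    universal closure truth value (universal closures range over all
    sentences). *)
Definition elem_equiv (L : language) (M N : structure L) : Prop :=
  forall phi : formula L,
    (forall e : nat -> M, sat e phi) <-> (forall e : nat -> N, sat e phi).

Definition elementary (L : language) (M N : structure L) (h : M -> N) : Prop :=
  forall (phi : formula L) (e : nat -> M), sat e phi <-> sat (h \o e) phi.

(** The monster model of Th(M) is replaced by an arbitrary model U of Th(M)
   (every such model elementarily embeds in the monster model and the
   monster model is such a model).  The single variable x is variable 0.
   An L(U)-formula phi_i(x) is an L-formula [phi i] together with an
   assignment [c i] of parameters from U to its other variables; likewise
   psi(x; b_j) is [psi] with the variables other than 0 assigned by [b j].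
   A partial type over U is consistent iff it is realized in some
   elementary extension of U. *)
Definition type_realized (L : language) (U : structure L)
  (phi : nat -> formula L) (c : nat -> nat -> U)
  (psi : formula L) (b : nat -> nat -> U) (i0 j0 : nat) : Prop :=
  exists (U' : structure L) (h : U -> U'), elementary h /\
  exists a : U',
    sat (upd (h \o c i0) 0 a) (phi i0) /\
    sat (upd (h \o b j0) 0 a) psi /\
    (forall i, i <> i0 -> ~ sat (upd (h \o c i) 0 a) (phi i)) /\
    (forall j, j <> j0 -> ~ sat (upd (h \o b j) 0 a) psi).

Definition dp_small (L : language) (M : structure L) : Prop :=
  ~ exists (U : structure L), elem_equiv M U /\
    exists (phi : nat -> formula L) (c : nat -> nat -> U)
           (psi : formula L) (b : nat -> nat -> U),
      forall i0 j0 : nat, type_realized phi c psi b i0 j0.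

Definition definable0 (L : language) (M : structure L) (n : nat)
  (R : ('I_n -> M) -> Prop) : Prop :=
  exists phi : formula L,
    forall e : nat -> M, sat e phi <-> R (fun i : 'I_n => e (nat_of_ord i)).

Definition simply_interprets0 (L L' : language) (M : structure L)
  (N : structure L') : Prop :=
  exists (S : M -> Prop) (E : M -> M -> Prop) (f : M -> N),
    definable0 (fun v : 'I_1 -> M => S (v ord0)) /\
    definable0 (fun v : 'I_2 -> M => E (v ord0) (v ord_max)) /\
    (forall a b : M, E a b -> S a /\ S b) /\
    (forall a b : M, S a -> S b -> (f a = f b <-> E a b)) /\
    (forall y : N, exists a : M, S a /\ f a = y) /\
    (forall r : Rel L',
        definable0 (fun v : 'I_(rarity r) -> M =>
          (forall i, S (v i)) /\ @interp_r L' N r (f \o v))) /\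
    (forall g : Func L',
        definable0 (fun v : 'I_(farity g).+1 -> M =>
          (forall i, S (v i)) /\
          @interp_f L' N g (fun i => f (v (widen_ord (leqnSn _) i)))
            = f (v ord_max))).

From mathcomp Require Import ssreflect ssrfun ssrbool eqtype ssrnat seq fintype.
From mathcomp Require Import boolp classical_sets filter.
From Stdlib Require Cantor.

(* Compactness reduces dp-smallness to finite data: Th(K) fails to be
   dp-small exactly when, for some phi and psi, K itself contains inp-patterns
   of every finite depth.  A single depth-n pattern is one formula with
   parameters, so it passes between elementarily equivalent models; and
   patterns of growing depth add up to a full pattern in a countable
   ultrapower, by Los's theorem.
   A simple interpretation (S, E, f) translates each formula p of N into a
   formula [tr p] of M that holds of representatives exactly when p holds of
   their f-images.  It therefore turns depth-n patterns in N into depth-n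
   patterns in M, replacing every parameter and witness by a representative. *)

Set Implicit Arguments.
Unset Strict Implicit.
Unset Printing Implicit Defensive.

Lemma partial_choice (A B : Type) (b0 : B) (P : A -> B -> Prop) :
  exists g : A -> B, forall a, (exists b, P a b) -> P a (g a).
Proof.
have : forall a, exists b, (exists b, P a b) -> P a b.
  move=> a; have [[b Pb]|nP] := pselect (exists b, P a b).
  - by exists b.
  - by exists b0.
by case/choice => g Hg; exists g.
Qed.

Section Renaming.
Variable L : language.

Fixpoint term_ind' (P : term L -> Prop) (Hv : forall n, P (Var L n))
  (Ha : forall f ts, (forall i, P (ts i)) -> P (@App L f ts)) (t : term L) : P t :=
  match t with
  | Var n => Hv n
  | App f ts => Ha f ts (fun i => term_ind' Hv Ha (ts i))
  end.

Fixpoint ren_term (s : nat -> nat) (t : term L) : term L :=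
  match t with
  | Var n => Var L (s n)
  | App f ts => @App L f (fun i => ren_term s (ts i))
  end.

Fixpoint ren_formula (s : nat -> nat) (p : formula L) : formula L :=
  match p with
  | Fals => Fals L
  | Equ t1 t2 => Equ (ren_term s t1) (ren_term s t2)
  | Atom r ts => @Atom L r (fun i => ren_term s (ts i))
  | Neg p => Neg (ren_formula s p)
  | Conj p q => Conj (ren_formula s p) (ren_formula s q)
  | Disj p q => Disj (ren_formula s p) (ren_formula s q)
  | Imp p q => Imp (ren_formula s p) (ren_formula s q)
  | All n p => All (s n) (ren_formula s p)
  | Ex n p => Ex (s n) (ren_formula s p)
  end.

Lemma eval_ren_term (M : structure L) (e : nat -> M) s t :
  eval e (ren_term s t) = eval (e \o s) t.
Proof.
by elim/term_ind': t => //= f ts IH; congr interp_f; apply: funext => i.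
Qed.

Lemma upd_comp (A : Type) (e : nat -> A) s n a :
  injective s -> upd e (s n) a \o s = upd (e \o s) n a.
Proof. by move=> s_inj; apply: funext => k; rewrite /upd /= (inj_eq s_inj). Qed.

Lemma upd_same (A : Type) (e : nat -> A) n a : upd e n a n = a.
Proof. by rewrite /upd eqxx. Qed.

Lemma sat_ren_formula (M : structure L) s p (e : nat -> M) :
  injective s -> sat e (ren_formula s p) <-> sat (e \o s) p.
Proof.
move=> s_inj; elim: p e => //=
  [t1 t2|r ts|p IH|p IHp q IHq|p IHp q IHq|p IHp q IHq|n p IH|n p IH] e.
- by rewrite !eval_ren_term.
- by under eq_fun => i do rewrite eval_ren_term.
- by rewrite IH.
- by rewrite IHp IHq.
- by rewrite IHp IHq.
- by rewrite IHp IHq.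
- by split => H a; move: (H a); rewrite IH upd_comp.
- by split => -[a H]; exists a; move: H; rewrite IH upd_comp.
Qed.

End Renaming.

Section Connectives.
Variable L : language.

Definition conjs (X : eqType) (s : seq X) (F : X -> formula L) : formula L :=
  foldr (fun x acc => Conj acc (F x)) (Neg (Fals L)) s.

Lemma sat_conjs (M : structure L) (X : eqType) (s : seq X) F (e : nat -> M) :
  sat e (conjs s F) <-> forall x, x \in s -> sat e (F x).
Proof.
elim: s => [|x s IH] /=; first by split => // _ [].
rewrite IH; split => [[Hs Hx] y|Hs].
- by rewrite inE => /orP [/eqP ->|/Hs].
- by split => [y ys|]; apply: Hs; rewrite inE ?ys ?orbT ?eqxx.
Qed.

Definition exs (l : seq nat) (p : formula L) : formula L := foldr (@Ex L) p l.

Lemma sat_exs (M : structure L) l p (e : nat -> M) :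
  sat e (exs l p) <-> exists e', (forall w, w \notin l -> e' w = e w) /\ sat e' p.
Proof.
elim: l e => [|x l IH] e /=.
  by split => [|[e' [e'e]]]; [exists e | rewrite (funext (e'e^~ isT))].
split => [[a /IH [e' [e'e p_e']]]|[e' [e'e p_e']]].
- exists e'; split => // w; rewrite inE negb_or => /andP [wx wl].
  by rewrite e'e // /upd (negbTE wx).
- exists (e' x); apply/IH; exists e'; split => // w wl.
  by rewrite /upd; case: eqP => [->|/eqP wx] //; rewrite e'e // inE negb_or wx.
Qed.

End Connectives.

Section Ultrafilter.
Variables (T : Type) (D : set_system T).
Context {D_ultra : UltraFilter D}.

Lemma ultra_notP (P : T -> Prop) : D (fun k => ~ P k) <-> ~ D P.
Proof.
split => [nP dP|nP]; last by case: (in_ultra_setVsetC P D_ultra).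
by apply: (@filter_const _ D _ False); apply: filterS2 nP dP.
Qed.

Lemma ultra_orP (P Q : T -> Prop) : D (fun k => P k \/ Q k) <-> D P \/ D Q.
Proof.
split => [dPQ|]; last by case=> dPQ; apply: filterS dPQ => k; [left | right].
have [dP|/ultra_notP nP] := pselect (D P); first by left.
by right; apply: filterS2 dPQ nP => k [].
Qed.

Lemma ultra_implyP (P Q : T -> Prop) : D (fun k => P k -> Q k) <-> (D P -> D Q).
Proof.
split => [dPQ dP|dPQ]; first exact: filter_app dPQ dP.
have [/dPQ dQ|/ultra_notP nP] := pselect (D P).
- by apply: filterS dQ.
- by apply: filterS nP.
Qed.

End Ultrafilter.

Section Ultrapower.
Variables (L : language) (M : structure L) (D : set_system nat).
Context {D_ultra : UltraFilter D}.

Definition ueq (s t : nat -> M) := D (fun k => s k = t k).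

Lemma ueq_refl s : ueq s s.
Proof. exact: filterE. Qed.

Lemma ueq_trans t s u : ueq s t -> ueq t u -> ueq s u.
Proof. by apply: filterS2 => k ->. Qed.

Lemma ueq_sym s t : ueq s t -> ueq t s.
Proof. exact: filterS. Qed.

Definition ucarrier := {P : (nat -> M) -> Prop | exists s, P = ueq s}.

Definition uclass (s : nat -> M) : ucarrier := exist _ (ueq s) (ex_intro _ s erefl).

Lemma uclass_eq s t : uclass s = uclass t <-> ueq s t.
Proof.
split => [/(f_equal sval) /= ->|st]; first exact: ueq_refl.
have ueq_st : ueq s = ueq t.
  apply: funext => u; apply: propext.
  by split; [apply: ueq_trans (ueq_sym st) | apply: ueq_trans st].
by apply: eq_exist_uncurried; exists ueq_st; apply: Prop_irrelevance.
Qed.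

Definition urepr (x : ucarrier) : nat -> M := projT1 (cid (svalP x)).

Lemma ureprK x : uclass (urepr x) = x.
Proof.
rewrite /urepr; case: cid => s /= sx.
by case: x sx => P Ps /= sx; subst P; congr exist; apply: Prop_irrelevance.
Qed.

Lemma uclassK s : ueq (urepr (uclass s)) s.
Proof. by apply/uclass_eq; rewrite ureprK. Qed.

Definition ultrapower : structure L :=
  @Structure L ucarrier (uclass (fun _ => witness M))
    (fun g args => uclass (fun k => interp_f (fun i => urepr (args i) k)))
    (fun r args => D (fun k => interp_r (fun i => urepr (args i) k))).

Lemma eval_ultrapower (e : nat -> nat -> M) t :
  @eval L ultrapower (fun w => uclass (e w)) t
  = uclass (fun k => eval (fun w => e w k) t).
Proof.
elim/term_ind': t => //= f ts IH; apply/uclass_eq.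
have ts_repr : D (fun k => forall i, urepr (uclass (fun k => eval (fun w => e w k) (ts i))) k
                                  = eval (fun w => e w k) (ts i)).
  by apply: filter_forall => i; apply: uclassK.
apply: filterS ts_repr.
by move=> k ts_k; congr interp_f; apply: funext => i; rewrite IH; exact: ts_k.
Qed.

Lemma upd_uclass (e : nat -> nat -> M) n s :
  upd (fun w => uclass (e w)) n (uclass s) = (fun w => uclass (upd e n s w)).
Proof. by apply: funext => w; rewrite /upd; case: eqP. Qed.

Lemma upd_apply (e : nat -> nat -> M) n s k :
  (fun w => upd e n s w k) = upd (fun w => e w k) n (s k).
Proof. by apply: funext => w; rewrite /upd; case: eqP. Qed.

Theorem los p (e : nat -> nat -> M) :
  @sat L ultrapower (fun w => uclass (e w)) p <-> D (fun k => sat (fun w => e w k) p).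
Proof.
elim: p e => [|t1 t2|r ts|p IH|p IHp q IHq|p IHp q IHq|p IHp q IHq|n p IH|n p IH] e /=.
- by split => // /(@filter_const _ D _ False).
- by rewrite !eval_ultrapower uclass_eq.
- have ts_repr : D (fun k => forall i, urepr (@eval L ultrapower (fun w => uclass (e w)) (ts i)) k
                                    = eval (fun w => e w k) (ts i)).
    by apply: filter_forall => i; rewrite eval_ultrapower; apply: uclassK.
  by split; apply: filterS2 ts_repr => k ts_k; congr interp_r; apply: funext => i; rewrite ts_k.
- by rewrite IH ultra_notP.
- by rewrite IHp IHq; symmetry; apply: near_andP.
- by rewrite IHp IHq ultra_orP.
- by rewrite IHp IHq ultra_implyP.
- split => [all_p|all_p a]; last first.
    by rewrite -(ureprK a) upd_uclass IH; apply: filterS all_p => k; rewrite upd_apply.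
  apply: contrapT; rewrite -ultra_notP => ex_np.
  have [s s_np] := partial_choice (witness M) (fun k a => ~ sat (upd (fun w => e w k) n a) p).
  have /ultra_notP : D (fun k => ~ sat (upd (fun w => e w k) n (s k)) p).
    by apply: filterS ex_np => k /existsNP /s_np.
  apply; move: (all_p (uclass s)); rewrite upd_uclass IH.
  by apply: filterS => k; rewrite upd_apply.
- split => [[a]|ex_p].
    rewrite -(ureprK a) upd_uclass IH; apply: filterS => k.
    by rewrite upd_apply; exists (urepr a k).
  have [s s_p] := partial_choice (witness M) (fun k a => sat (upd (fun w => e w k) n a) p).
  by exists (uclass s); rewrite upd_uclass IH; apply: filterS ex_p => k /s_p; rewrite upd_apply.
Qed.

Lemma sat_ultrapower_upd0 (c : nat -> nat -> M) (s : nat -> M) p :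
  @sat L ultrapower (upd (fun w => uclass (fun k => c k w)) 0 (uclass s)) p <->
  D (fun k => sat (upd (c k) 0 (s k)) p).
Proof.
by rewrite (upd_uclass (fun w k => c k w)) los; split; apply: filterS => k; rewrite upd_apply.
Qed.

Lemma ultrapower_elem_equiv : elem_equiv M ultrapower.
Proof.
move=> p; split => [all_p e|all_p e].
- by rewrite -(funext (fun w => ureprK (e w))); apply/los/filterE.
- apply: (@filter_const _ D _); apply/los/all_p.
Qed.

End Ultrapower.

Lemma cofinite_ultrafilter :
  exists D : set_system nat, UltraFilter D /\ forall m, D (fun k => m < k).
Proof.
have [D [D_ultra sub_D]] := ultraFilterLemma eventually_filter.
by exists D; split => // m; apply: sub_D; exists m.+1.
Qed.

Section Patterns.
Variable L : language.

(* The depth-n part of the configuration in [dp_small], realized in K itself;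
   variable 0 is the variable x of the type. *)
Definition dp_witness (K : structure L) (phi : nat -> formula L) (c : nat -> nat -> K)
    (psi : formula L) (b : nat -> nat -> K) (n i0 j0 : nat) (a : K) : Prop :=
  [/\ sat (upd (c i0) 0 a) (phi i0), sat (upd (b j0) 0 a) psi,
      forall i, i < n -> i <> i0 -> ~ sat (upd (c i) 0 a) (phi i) &
      forall j, j < n -> j <> j0 -> ~ sat (upd (b j) 0 a) psi].

Definition dp_pattern (K : structure L) phi (c : nat -> nat -> K) psi b n :=
  forall i0 j0, i0 < n -> j0 < n -> exists a, dp_witness phi c psi b n i0 j0 a.

Definition dp_patterns (K : structure L) (phi : nat -> formula L) (psi : formula L) :=
  forall n, exists c b : nat -> nat -> K, dp_pattern phi c psi b n.

Lemma dp_witness_params (K : structure L) phi (c c' : nat -> nat -> K) psi b b' n i0 j0 a :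
  (forall i x, upd (c i) 0 x = upd (c' i) 0 x) ->
  (forall j x, upd (b j) 0 x = upd (b' j) 0 x) ->
  dp_witness phi c psi b n i0 j0 a -> dp_witness phi c' psi b' n i0 j0 a.
Proof.
move=> Ec Eb [phi_i0 psi_j0 phi_i psi_j]; split; rewrite -?Ec -?Eb //.
- by move=> i in_ ii0; rewrite -Ec; apply: phi_i.
- by move=> j jn jj0; rewrite -Eb; apply: psi_j.
Qed.

(* [rho t] fixes the shared variable 0 and moves every other variable to a slot
   reserved for the t-th formula; [comb c b] is the single environment holding
   the parameters [c i] in the slots of [rho i.*2] and [b j] in those of
   [rho j.*2.+1]. *)
Definition rho (t v : nat) : nat := if v == 0 then 0 else (Cantor.to_nat (t, v)).+1.

Lemma rho_inj t : injective (rho t).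
Proof.
move=> v w; rewrite /rho; case: eqP => [->|_]; case: eqP => [->|_] //.
by move/succn_inj/(can_inj Cantor.cancel_of_to) => [].
Qed.

Definition comb (A : Type) (c b : nat -> nat -> A) (w : nat) : A :=
  if w is w'.+1 then
    let: (t, v) := Cantor.of_nat w' in if odd t then b t./2 v else c t./2 v
  else c 0 0.

Lemma comb_succ (A : Type) (c b : nat -> nat -> A) w :
  comb c b w.+1 = let: (t, v) := Cantor.of_nat w in if odd t then b t./2 v else c t./2 v.
Proof. by []. Qed.

Lemma comb_comp (A B : Type) (h : A -> B) c b :
  h \o comb c b = comb (fun i v => h (c i v)) (fun j v => h (b j v)).
Proof.
by apply: funext => -[|w] //=; case: Cantor.of_nat => t v; case: ifP.
Qed.

Lemma upd_comb_even (A : Type) (c b : nat -> nat -> A) i a :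
  upd (comb c b \o rho i.*2) 0 a = upd (c i) 0 a.
Proof.
apply: funext => v; rewrite /upd /comp /rho; case: eqP => // _.
by rewrite comb_succ Cantor.cancel_of_to /= odd_double doubleK.
Qed.

Lemma upd_comb_odd (A : Type) (c b : nat -> nat -> A) j a :
  upd (comb c b \o rho j.*2.+1) 0 a = upd (b j) 0 a.
Proof.
apply: funext => v; rewrite /upd /comp /rho; case: eqP => // _.
by rewrite comb_succ Cantor.cancel_of_to /= odd_double /= uphalf_half odd_double doubleK.
Qed.

Lemma sat_ren_rho (K : structure L) (e : nat -> K) t a p :
  sat (upd e 0 a) (ren_formula (rho t) p) <-> sat (upd (e \o rho t) 0 a) p.
Proof.
rewrite sat_ren_formula; last exact: rho_inj.
by rewrite -(upd_comp _ _ _ (@rho_inj t)).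
Qed.

Variables (phi : nat -> formula L) (psi : formula L).

Definition phi_at i := ren_formula (rho i.*2) (phi i).
Definition psi_at j := ren_formula (rho j.*2.+1) psi.

Definition inner n i0 j0 : formula L :=
  Ex 0 (Conj (Conj (Conj (phi_at i0) (psi_at j0))
    (conjs [seq i <- iota 0 n | i != i0] (fun i => Neg (phi_at i))))
    (conjs [seq j <- iota 0 n | j != j0] (fun j => Neg (psi_at j)))).

Definition body n : formula L :=
  conjs (iota 0 n) (fun i0 => conjs (iota 0 n) (fun j0 => inner n i0 j0)).

Lemma sat_inner (K : structure L) (e : nat -> K) n i0 j0 :
  sat e (inner n i0 j0) <->
  exists a, dp_witness phi (fun i => e \o rho i.*2) psi (fun j => e \o rho j.*2.+1) n i0 j0 a.
Proof.
have mem_other m k k0 : (k \in [seq k <- iota 0 m | k != k0]) = (k < m) && (k != k0).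
  by rewrite mem_filter mem_iota andbC.
rewrite /= /phi_at /psi_at; split => -[a Ha]; exists a; move: Ha.
- rewrite !sat_ren_rho => -[[[phi_i0 psi_j0] /sat_conjs phi_i] /sat_conjs psi_j].
  split => // [i in_ ii0|j jn jj0].
  + by rewrite -sat_ren_rho; apply: phi_i; rewrite mem_other in_; apply/eqP.
  + by rewrite -sat_ren_rho; apply: psi_j; rewrite mem_other jn; apply/eqP.
- move=> [phi_i0 psi_j0 phi_i psi_j]; rewrite !sat_ren_rho; split; first split => //.
  + by apply/sat_conjs => i; rewrite mem_other /= sat_ren_rho => /andP [? /eqP]; apply: phi_i.
  + by apply/sat_conjs => j; rewrite mem_other /= sat_ren_rho => /andP [? /eqP]; apply: psi_j.
Qed.

Lemma sat_body (K : structure L) (e : nat -> K) n :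
  sat e (body n) <->
  dp_pattern phi (fun i => e \o rho i.*2) psi (fun j => e \o rho j.*2.+1) n.
Proof.
rewrite /body sat_conjs; split => [body_e i0 j0 i0n j0n|pat_e i0].
- have /sat_conjs body_i0 : sat e (conjs (iota 0 n) (fun j0 => inner n i0 j0)).
    by apply: body_e; rewrite mem_iota.
  by apply/sat_inner/body_i0; rewrite mem_iota.
- rewrite mem_iota => i0n; apply/sat_conjs => j0; rewrite mem_iota => j0n.
  exact/sat_inner/pat_e.
Qed.

Lemma type_realized_inner (U : structure L) (c b : nat -> nat -> U) n i0 j0 :
  type_realized phi c psi b i0 j0 -> sat (comb c b) (inner n i0 j0).
Proof.
case=> U' [h [h_el [a [phi_i0 [psi_j0 [phi_i psi_j]]]]]].
apply/(h_el _ (comb c b)); rewrite comb_comp; apply/sat_inner; exists a.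
apply: dp_witness_params (fun i x => esym (upd_comb_even _ _ i x))
  (fun j x => esym (upd_comb_odd _ _ j x)) _.
by split => // [i _|j _]; [apply: phi_i | apply: psi_j].
Qed.

End Patterns.

Lemma dp_patterns_of_not_dp_small (L : language) (K : structure L) :
  ~ dp_small K -> exists phi psi, dp_patterns K phi psi.
Proof.
move/contrapT => [U [KU [phi [c [psi [b realized]]]]]]; exists phi, psi => n.
have [e body_e] : exists e : nat -> K, sat e (body phi psi n).
  apply: contrapT => no_body; apply: ((KU (Neg (body phi psi n))).1 _ (comb c b)).
    by move=> e body_e; apply: no_body; exists e.
  by apply/sat_body => i0 j0 _ _; apply/sat_inner/type_realized_inner.
by exists (fun i => e \o rho i.*2), (fun j => e \o rho j.*2.+1); apply/sat_body.
Qed.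

Lemma not_dp_small_of_dp_patterns (L : language) (K : structure L) phi psi :
  dp_patterns K phi psi -> ~ dp_small K.
Proof.
move=> pat; have /choice [cb cbP] : forall n, exists cb : (nat -> nat -> K) * (nat -> nat -> K),
    dp_pattern phi cb.1 psi cb.2 n.
  by move=> n; have [c [b P]] := pat n; exists (c, b).
have [a aP] := partial_choice (witness K) (fun (t : nat * nat * nat) x =>
  dp_witness phi (cb t.1.1).1 psi (cb t.1.1).2 t.1.1 t.1.2 t.2 x).
have [D [D_ultra D_cofinite]] := cofinite_ultrafilter.
apply; exists (ultrapower K D); split; first exact: ultrapower_elem_equiv.
exists phi, (fun i w => uclass D (fun k => (cb k).1 i w)),
       psi, (fun j w => uclass D (fun k => (cb k).2 j w)) => i0 j0.
exists (ultrapower K D), id; split => [p e|]; first exact: iff_refl.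
exists (uclass D (fun k => a (k, i0, j0))).
have D_eventually m (P : nat -> Prop) :
    (forall k, m < k -> dp_witness phi (cb k).1 psi (cb k).2 k i0 j0 (a (k, i0, j0)) -> P k) ->
    D P.
  move=> HP; apply: filterS (D_cofinite (maxn m (maxn i0 j0))) => k.
  rewrite !gtn_max => /and3P [mk ik jk]; apply: HP => //.
  by apply: (aP (k, i0, j0)); apply: cbP.
split; [|split; [|split => [i ii0|j jj0]]].
- by apply/sat_ultrapower_upd0/(D_eventually 0) => k _ [].
- by apply/sat_ultrapower_upd0/(D_eventually 0) => k _ [].
- move/sat_ultrapower_upd0; apply/ultra_notP/(D_eventually i) => k ik [_ _ phi_i _].
  exact: phi_i.
- move/sat_ultrapower_upd0; apply/ultra_notP/(D_eventually j) => k jk [_ _ _ psi_j].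
  exact: psi_j.
Qed.

Theorem dp_smallP (L : language) (K : structure L) :
  dp_small K <-> forall phi psi, ~ dp_patterns K phi psi.
Proof.
split => [dpK phi psi /not_dp_small_of_dp_patterns//|no_pat].
by apply: contrapT => /dp_patterns_of_not_dp_small [phi [psi]]; apply: no_pat.
Qed.

(* Injective for duplicate-free [l]: the variables beyond [size l] are shifted
   past every entry of [l]. *)
Definition seq_ren (l : seq nat) (v : nat) : nat :=
  if v < size l then nth 0 l v else v + (sumn l).+1.

Lemma leq_sumn_mem (l : seq nat) x : x \in l -> x <= sumn l.
Proof.
elim: l => //= y l IH; rewrite inE => /orP [/eqP ->|/IH]; first exact: leq_addr.
by move/leq_trans; apply; apply: leq_addl.
Qed.

Lemma seq_ren_inj l : uniq l -> injective (seq_ren l).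
Proof.
have fresh v w : v < size l -> nth 0 l v <> w + (sumn l).+1.
  by move=> vl E; have := leq_sumn_mem (mem_nth 0 vl); rewrite E addnS ltnNge leq_addl.
move=> ul v w; rewrite /seq_ren; case: ifP => vl; case: ifP => wl.
- by move/eqP; rewrite nth_uniq // => /eqP.
- by move/fresh.
- by move/esym/fresh.
- exact: addIn.
Qed.

Definition auxv (d i : nat) : nat := (Cantor.to_nat (d, i)).*2.+1.

Definition auxl (d k : nat) : seq nat := map (auxv d) (iota 0 k).

Lemma auxv_inj d i d' i' : auxv d i = auxv d' i' -> (d, i) = (d', i').
Proof. by move/succn_inj/(can_inj doubleK)/(can_inj Cantor.cancel_of_to). Qed.

Lemma auxv_neq_double d i v : auxv d i <> v.*2.
Proof. by move/(congr1 odd); rewrite /= !odd_double. Qed.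

Lemma size_auxl d k : size (auxl d k) = k.
Proof. by rewrite size_map size_iota. Qed.

Lemma nth_auxl d k i : i < k -> nth 0 (auxl d k) i = auxv d i.
Proof. by move=> ik; rewrite (nth_map 0) ?size_iota // nth_iota. Qed.

Lemma uniq_auxl d k : uniq (auxl d k).
Proof. by rewrite map_inj_uniq ?iota_uniq // => i j /auxv_inj [->]. Qed.

Lemma double_notin_auxl d k v : v.*2 \notin auxl d k.
Proof. by apply/mapP => -[i _ /esym /auxv_neq_double]. Qed.

Lemma exists_env_auxl (A : Type) d k (vals : 'I_k -> A) (e : nat -> A) :
  exists e', (forall w, w \notin auxl d k -> e' w = e w) /\
             forall o : 'I_k, e' (auxv d o) = vals o.
Proof.
exists (fun w => if [pick o : 'I_k | w == auxv d o] is Some o then vals o else e w).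
split => [w wl|o].
- case: pickP => // o /eqP wo; suff : w \in auxl d k by rewrite (negbTE wl).
  by rewrite wo map_f // mem_iota ltn_ord.
- case: pickP => [o' /eqP /auxv_inj [/ord_inj ->] //|/(_ o)].
  by rewrite eqxx.
Qed.

Definition with_args (L : language) d k (args : 'I_k -> formula L) (q : formula L) :=
  exs (auxl d k) (Conj (conjs (enum 'I_k) args) q).

Lemma sat_with_args (L : language) (M : structure L) d k args q (e : nat -> M) :
  sat e (@with_args L d k args q) <->
  exists e', (forall w, w \notin auxl d k -> e' w = e w) /\
             (forall o, sat e' (args o)) /\ sat e' q.
Proof.
rewrite sat_exs; split => -[e' [e'e H]]; exists e'; split => //.
- by case: H => /sat_conjs args_e' q_e'; split => // o; apply: args_e'; rewrite mem_enum.
- by case: H => args_e' q_e'; split => //; apply/sat_conjs.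
Qed.

Section Interpretation.
Variables (L L' : language) (M : structure L) (N : structure L').
Variables (S : M -> Prop) (f : M -> N) (sec : N -> M).
Hypothesis sec_S : forall y, S (sec y).
Hypothesis f_sec : forall y, f (sec y) = y.

Definition pullback n (th : formula L) (P : ('I_n -> N) -> Prop) :=
  forall e : nat -> M, sat e th <-> (forall i : 'I_n, S (e i)) /\ P (fun i => f (e i)).

Variables (thS thE : formula L) (thR : Rel L' -> formula L) (thF : Func L' -> formula L).
Hypothesis thS_pullback : pullback thS (fun _ : 'I_1 -> N => True).
Hypothesis thE_pullback : pullback thE (fun w : 'I_2 -> N => w ord0 = w ord_max).
Hypothesis thR_pullback : forall r, pullback (thR r) (@interp_r L' N r).
Hypothesis thF_pullback : forall g, pullback (thF g)
  (fun w => @interp_f L' N g (fun i => w (widen_ord (leqnSn _) i)) = w ord_max).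

Definition at_vars (l : seq nat) (th : formula L) := ren_formula (seq_ren l) th.

Lemma sat_at_vars n th (P : ('I_n -> N) -> Prop) (l : seq nat) (e : nat -> M) :
  pullback th P -> uniq l -> size l = n ->
  sat e (at_vars l th) <->
  (forall i : 'I_n, S (e (nth 0 l i))) /\ P (fun i => f (e (nth 0 l i))).
Proof.
move=> thP ul sl; rewrite sat_ren_formula ?thP; last exact: seq_ren_inj.
have E (i : 'I_n) : seq_ren l i = nth 0 l i by rewrite /seq_ren sl ltn_ord.
by split => -[HS HP]; (split => [i|]; [move: (HS i) | move: HP; congr P; apply: funext => i]);
  rewrite /= E.
Qed.

(* An M-environment e encodes the N-environment [decode_env e] through its even
   variables; the odd variable [auxv d i] holds a representative of the i-th
   argument of a subterm at depth d. *)
Definition in_dom (e : nat -> M) := forall v, S (e v.*2).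

Definition decode_env (e : nat -> M) : nat -> N := fun v => f (e v.*2).

Definition codes (a : M) (y : N) := S a /\ f a = y.

Lemma in_dom_upd e n a : in_dom e -> S a -> in_dom (upd e n.*2 a).
Proof. by move=> eS Sa v; rewrite /upd; case: eqP. Qed.

Lemma decode_env_upd e n a : decode_env (upd e n.*2 a) = upd (decode_env e) n (f a).
Proof.
by apply: funext => v; rewrite /decode_env /upd (inj_eq (can_inj doubleK)); case: eqP.
Qed.

Lemma agree_off_auxl d k (e e' : nat -> M) :
  (forall w, w \notin auxl d k -> e' w = e w) -> in_dom e ->
  in_dom e' /\ decode_env e' = decode_env e.
Proof.
move=> e'e eS; have e'_even v : e' v.*2 = e v.*2 by rewrite e'e ?double_notin_auxl.
by split => [v|]; [rewrite e'_even | apply: funext => v; rewrite /decode_env e'_even].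
Qed.

Definition fresh_from d y := (forall v, y <> v.*2) /\ (forall d' j, d <= d' -> y <> auxv d' j).

Lemma auxv_fresh d i : fresh_from d.+1 (auxv d i).
Proof.
split => [v|d' j dd' /auxv_inj [dE _]]; first exact: auxv_neq_double.
by move: dd'; rewrite dE ltnn.
Qed.

Fixpoint teq (d : nat) (t : term L') (y : nat) : formula L :=
  match t with
  | Var v => at_vars [:: v.*2; y] thE
  | App g ts => with_args d (fun o => teq d.+1 (ts o) (auxv d o))
                  (at_vars (rcons (auxl d (farity g)) y) (thF g))
  end.

Lemma sat_args_teq d k (ts : 'I_k -> term L') q (e : nat -> M) :
  (forall (o : 'I_k) (e' : nat -> M), in_dom e' ->
     sat e' (teq d.+1 (ts o) (auxv d o)) <-> codes (e' (auxv d o)) (eval (decode_env e') (ts o))) ->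
  in_dom e ->
  sat e (with_args d (fun o => teq d.+1 (ts o) (auxv d o)) q) <->
  exists e', (forall w, w \notin auxl d k -> e' w = e w) /\
             (forall o : 'I_k, codes (e' (auxv d o)) (eval (decode_env e) (ts o))) /\ sat e' q.
Proof.
move=> ts_teq eS; rewrite sat_with_args.
split => -[e' [e'e [ts_e' q_e']]]; have [e'S decode_envE] := agree_off_auxl e'e eS;
  exists e'; split => //; split => // o.
- by rewrite -decode_envE -ts_teq.
- by rewrite ts_teq // decode_envE; apply: ts_e'.
Qed.

Lemma fresh_notin_auxl d k y : fresh_from d y -> y \notin auxl d k.
Proof. by case=> _ yfresh; apply/mapP => -[i _ /yfresh]; apply. Qed.

Lemma nth_rcons_auxl d k y i : i < k -> nth 0 (rcons (auxl d k) y) i = auxv d i.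
Proof. by move=> ik; rewrite nth_rcons size_auxl ik nth_auxl. Qed.

Lemma nth_rcons_auxl_max d k y : nth 0 (rcons (auxl d k) y) (@ord_max k) = y.
Proof. by rewrite /= nth_rcons size_auxl ltnn eqxx. Qed.

Lemma teq_spec t d y (e : nat -> M) : in_dom e -> fresh_from d y ->
  sat e (teq d t y) <-> codes (e y) (eval (decode_env e) t).
Proof.
elim/term_ind': t d y e => [v|g ts IH] d y e eS yfresh /=.
  have vy : uniq [:: v.*2; y] by rewrite /= inE andbT; apply/eqP => /esym; apply yfresh.
  rewrite (sat_at_vars _ thE_pullback vy) //=; split => [[vyS fE]|[yS fE]].
  - by split; [apply: (vyS ord_max) | rewrite /decode_env fE].
  - by split; [case=> [[|[|]]] //= _; apply: eS | rewrite fE].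
set k := farity g; have yl := fresh_notin_auxl k yfresh.
have ul : uniq (rcons (auxl d k) y) by rewrite rcons_uniq yl uniq_auxl.
have sl : size (rcons (auxl d k) y) = k.+1 by rewrite size_rcons size_auxl.
rewrite sat_args_teq // => [|o e' e'S]; last exact: IH (auxv_fresh _ _).
split => [[e' [e'e [ts_e' /(sat_at_vars _ (thF_pullback g) ul sl) [HS Hg]]]]|[yS fE]].
- have := HS ord_max; rewrite /= nth_rcons_auxl_max e'e // => yS.
  move: Hg; rewrite /= nth_rcons_auxl_max e'e // => fE.
  split => //; rewrite -fE; congr interp_f; apply: funext => i.
  by rewrite nth_rcons_auxl //; case: (ts_e' i).
- have [e' [e'e e'aux]] := exists_env_auxl d (fun o => sec (eval (decode_env e) (ts o))) e.
  exists e'; split => //; split => [o|]; first by rewrite e'aux; split.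
  apply/(sat_at_vars _ (thF_pullback g) ul sl); split => [i|].
  + rewrite nth_rcons size_auxl; case: ltnP => ik.
      by rewrite nth_auxl // (e'aux (Ordinal ik)).
    by rewrite ifT ?e'e // eqn_leq ik -ltnS ltn_ord.
  + rewrite nth_rcons_auxl_max e'e // fE; congr interp_f; apply: funext => i.
    by rewrite /= nth_rcons_auxl // e'aux f_sec.
Qed.

Definition apply_rel k (ts : 'I_k -> term L') (th : formula L) : formula L :=
  with_args 0 (fun o => teq 1 (ts o) (auxv 0 o)) (at_vars (auxl 0 k) th).

Lemma sat_apply_rel k ts th (P : ('I_k -> N) -> Prop) (e : nat -> M) :
  pullback th P -> in_dom e -> sat e (apply_rel ts th) <-> P (fun o => eval (decode_env e) (ts o)).
Proof.
move=> thP eS; have sl := size_auxl 0 k.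
rewrite /apply_rel sat_args_teq // => [|o e' e'S]; last exact: teq_spec (auxv_fresh _ _).
split => [[e' [e'e [ts_e' /(sat_at_vars _ thP (uniq_auxl 0 k) sl) [_ HP]]]]|HP].
- by move: HP; congr P; apply: funext => o; rewrite nth_auxl //; case: (ts_e' o).
- have [e' [e'e e'aux]] := exists_env_auxl 0 (fun o => sec (eval (decode_env e) (ts o))) e.
  exists e'; split => //; split => [o|]; first by rewrite e'aux; split.
  apply/(sat_at_vars _ thP (uniq_auxl 0 k) sl).
  split => [o|]; first by rewrite nth_auxl // e'aux.
  by move: HP; congr P; apply: funext => o; rewrite nth_auxl // e'aux f_sec.
Qed.

Lemma sat_at_var_thS (e : nat -> M) v : sat e (at_vars [:: v] thS) <-> S (e v).
Proof.
rewrite (sat_at_vars _ thS_pullback) //.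
by split => [[/(_ ord0)]|Sv] //; split => // -[[|//] ?].
Qed.

Fixpoint tr (p : formula L') : formula L :=
  match p with
  | Fals => Fals L
  | Equ t1 t2 => apply_rel (fun o : 'I_2 => nth t1 [:: t1; t2] o) thE
  | Atom r ts => apply_rel ts (thR r)
  | Neg p => Neg (tr p)
  | Conj p q => Conj (tr p) (tr q)
  | Disj p q => Disj (tr p) (tr q)
  | Imp p q => Imp (tr p) (tr q)
  | All n p => All n.*2 (Imp (at_vars [:: n.*2] thS) (tr p))
  | Ex n p => Ex n.*2 (Conj (at_vars [:: n.*2] thS) (tr p))
  end.

Lemma tr_spec p (e : nat -> M) : in_dom e -> sat e (tr p) <-> sat (decode_env e) p.
Proof.
elim: p e => [|t1 t2|r ts|p IH|p IHp q IHq|p IHp q IHq|p IHp q IHq|n p IH|n p IH] e eS.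
- by [].
- exact: sat_apply_rel _ thE_pullback eS.
- exact: sat_apply_rel _ (thR_pullback r) eS.
- by rewrite /= IH.
- by rewrite /= IHp // IHq.
- by rewrite /= IHp // IHq.
- by rewrite /= IHp // IHq.
all: rewrite /=; have IHa a :
    S a -> sat (upd e n.*2 a) (tr p) <-> sat (upd (decode_env e) n (f a)) p
  by move=> Sa; rewrite IH ?decode_env_upd //; apply: in_dom_upd.
- split => [Hp b|Hp a]; last by rewrite sat_at_var_thS upd_same => Sa; rewrite IHa.
  rewrite -(f_sec b) -IHa //; apply: Hp; rewrite sat_at_var_thS upd_same //.
- split => [[a []]|[b]].
    by rewrite sat_at_var_thS upd_same => Sa; rewrite IHa // => ?; exists (f a).
  rewrite -{1}(f_sec b) -IHa // => ?; exists (sec b).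
  by rewrite sat_at_var_thS upd_same.
Qed.

Definition lift_env (g : nat -> N) (w : nat) : M := sec (g w./2).

Lemma sat_tr_lift_env (g : nat -> N) x p :
  sat (upd (lift_env g) 0 (sec x)) (tr p) <-> sat (upd g 0 x) p.
Proof.
have -> : upd g 0 x = decode_env (upd (lift_env g) 0 (sec x)).
  apply: funext => -[|v]; rewrite /decode_env /upd /=; first by rewrite f_sec.
  by rewrite /lift_env doubleK f_sec.
by apply: tr_spec => v; rewrite /upd; case: eqP => _; apply: sec_S.
Qed.

Lemma dp_patterns_tr phi psi :
  dp_patterns N phi psi -> dp_patterns M (fun i => tr (phi i)) (tr psi).
Proof.
move=> patN n; have [c [b pat]] := patN n.
exists (fun i => lift_env (c i)), (fun j => lift_env (b j)) => i0 j0 i0n j0n.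
have [a [phi_i0 psi_j0 phi_i psi_j]] := pat i0 j0 i0n j0n.
exists (sec a); split; rewrite ?sat_tr_lift_env //.
- by move=> i ? ?; rewrite sat_tr_lift_env; apply: phi_i.
- by move=> j ? ?; rewrite sat_tr_lift_env; apply: psi_j.
Qed.

End Interpretation.

Lemma simply_interprets0_dp_patterns (L L' : language) (M : structure L) (N : structure L') :
  simply_interprets0 M N ->
  forall phi psi, dp_patterns N phi psi -> exists phi' psi', dp_patterns M phi' psi'.
Proof.
move=> [S [E [f [[thS thS_def] [[thE thE_def] [E_S [f_E [f_onto [thR_def thF_def]]]]]]]]].
have /choice [sec secP] := f_onto; have /choice [thR thR_pb] := thR_def.
have /choice [thF thF_pb] := thF_def.
have sec_S y : S (sec y) by case: (secP y).
have f_sec y : f (sec y) = y by case: (secP y).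
have thS_pb : pullback S f thS (fun _ : 'I_1 -> N => True).
  move=> e; rewrite thS_def; split => [? |[/(_ ord0)]] //.
  by split => // -[[|//] ?].
have thE_pb : pullback S f thE (fun w : 'I_2 -> N => w ord0 = w ord_max).
  move=> e; rewrite thE_def; split => [Ee|[eS fE]].
    by have [S0 S1] := E_S _ _ Ee; split; [case=> [[|[|]]] | apply/f_E].
  exact: (f_E _ _ (eS ord0) (eS ord_max)).1.
move=> phi psi /(dp_patterns_tr sec_S f_sec thS_pb thE_pb thR_pb thF_pb) patM.
by do 2 eexists; exact: patM.
Qed.

Theorem lemma2p6 (L L' : language) (M : structure L) (N : structure L') :
  simply_interprets0 M N -> dp_small M -> dp_small N.
Proof.
move=> MN; rewrite !dp_smallP => noM phi psi /(simply_interprets0_dp_patterns MN).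
by case=> [phi' [psi']]; apply: noM.
Qed.
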